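(* Let $0\le\alpha\le\beta\le\pi/2$, $P_1,P_2>0$, and define $\phi$ and $\mathcal R(\theta)$ as in the context. Then $$\max\Big\{R_1+R_2:(R_1,R_2)\in\bigcup_{\theta\in[\alpha,\beta]}\mathcal R(\theta)\Big\}=\mathcal C\big(\phi(\theta^* )\big),$$ where, with $T=\frac{P_1\sin2\alpha+P_2\sin2\beta}{P_1\cos2\alpha+P_2\cos2\beta}$ (assuming $P_1\cos2\alpha+P_2\cos2\beta\neq0$), $\theta^*=\frac12\arctan T$ if $T\ge0$ and $\theta^*=\frac12(\pi+\arctan T)$ if $T\le0$.
   Context: $\mathcal C(x)=\frac12\log_2(1+x)$, $\phi_1(\theta)=P_1\cos^2(\theta-\alpha)$, $\phi_2(\theta)=P_2\cos^2(\theta-\beta)$, $\phi=\phi_1+\phi_2$, and $\mathcal R(\theta)=\{(R_1,R_2)\ge0:R_1\le\mathcal C(\phi_1(\theta)),R_2\le\mathcal C(\phi_2(\theta)),R_1+R_2\le\mathcal C(\phi(\theta))\}$. (In the two-hop MAC, $P_i=\|\mathbf h_{0i}\|^2P_{S_i}$, $\alpha,\beta$ are the angles of the normalized source-to-relay channel vectors in an orthonormal basis of their span, and $\bigcup_{\theta\in[\alpha,\beta]}\mathcal R(\theta)$ is the first outer bound.) *)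

From Stdlib Require Import Reals.
Open Scope R_scope.

Definition Ccap (x : R) : R := / 2 * (ln (1 + x) / ln 2).

Definition phi1 (P1 alpha th : R) : R := P1 * (cos (th - alpha)) ^ 2.
Definition phi2 (P2 beta th : R) : R := P2 * (cos (th - beta)) ^ 2.
Definition phi (P1 P2 alpha beta th : R) : R := phi1 P1 alpha th + phi2 P2 beta th.

Definition in_region (P1 P2 alpha beta th R1 R2 : R) : Prop :=
  0 <= R1 /\ 0 <= R2 /\
  R1 <= Ccap (phi1 P1 alpha th) /\
  R2 <= Ccap (phi2 P2 beta th) /\
  R1 + R2 <= Ccap (phi P1 P2 alpha beta th).

Definition in_union (P1 P2 alpha beta R1 R2 : R) : Prop :=
  exists th, alpha <= th <= beta /\ in_region P1 P2 alpha beta th R1 R2.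

Definition sum_rates (P1 P2 alpha beta : R) (s : R) : Prop :=
  exists R1 R2, in_union P1 P2 alpha beta R1 R2 /\ s = R1 + R2.

Definition is_max (S : R -> Prop) (m : R) : Prop :=
  S m /\ forall s, S s -> s <= m.

Definition Tval (P1 P2 alpha beta : R) : R :=
  (P1 * sin (2 * alpha) + P2 * sin (2 * beta)) /
  (P1 * cos (2 * alpha) + P2 * cos (2 * beta)).

(* Writing [P1 e^{2iα} + P2 e^{2iβ} = ρ e^{iu}] with [ρ > 0], one has
   [φ(θ) = (P1 + P2)/2 + ρ cos(2θ - u)/2], so [φ] is globally maximal at [θ = u/2];
   and [u/2 ∈ [α, β]] because [ρ e^{iu}] is a positive combination of two unit
   vectors whose angles [2α ≤ 2β] lie in [[0, π]].  The largest sum rate of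
   [R(θ)] is [C(φ(θ))] (take [R1 = C(φ1)], using subadditivity of [C]), and [C]
   is increasing, so the maximum over the union is [C(φ(u/2))].  Finally
   [u = arctan T] when the real part [P1 cos 2α + P2 cos 2β] is positive and
   [u = π + arctan T] when it is negative. *)

From Stdlib Require Import Reals Lra.
Open Scope R_scope.

Lemma ln_le_compat x y : 0 < x -> x <= y -> ln x <= ln y.
Proof. intros Hx [Hxy | <-]; [left; apply ln_increasing |]; lra. Qed.

Lemma ln2_pos : 0 < ln 2.
Proof. rewrite <- ln_1. apply ln_increasing; lra. Qed.

Lemma Ccap_scaled_ln x : Ccap x = / (2 * ln 2) * ln (1 + x).
Proof. unfold Ccap. pose proof ln2_pos. field. lra. Qed.

Lemma Ccap_scale_pos : 0 <= / (2 * ln 2).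
Proof. pose proof ln2_pos. left. apply Rinv_0_lt_compat. lra. Qed.

Lemma Ccap_le a b : 0 <= a -> a <= b -> Ccap a <= Ccap b.
Proof.
  intros Ha Hab. rewrite !Ccap_scaled_ln.
  apply Rmult_le_compat_l; [apply Ccap_scale_pos | apply ln_le_compat; lra].
Qed.

Lemma Ccap_ge0 a : 0 <= a -> 0 <= Ccap a.
Proof.
  intros Ha. replace 0 with (Ccap 0); [apply Ccap_le; lra |].
  rewrite Ccap_scaled_ln, Rplus_0_r, ln_1. ring.
Qed.

Lemma Ccap_subadditive a b : 0 <= a -> 0 <= b -> Ccap (a + b) <= Ccap a + Ccap b.
Proof.
  intros Ha Hb. rewrite !Ccap_scaled_ln, <- Rmult_plus_distr_l, <- ln_mult by lra.
  apply Rmult_le_compat_l; [apply Ccap_scale_pos | apply ln_le_compat; nra].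
Qed.

Lemma phi1_ge0 P a t : 0 <= P -> 0 <= phi1 P a t.
Proof. intros HP. apply Rmult_le_pos; [exact HP | apply pow2_ge_0]. Qed.

Lemma phi2_ge0 P b t : 0 <= P -> 0 <= phi2 P b t.
Proof. intros HP. apply Rmult_le_pos; [exact HP | apply pow2_ge_0]. Qed.

Lemma sum_rates_is_max P1 P2 alpha beta ts :
  0 <= P1 -> 0 <= P2 -> alpha <= ts <= beta ->
  (forall t, alpha <= t <= beta -> phi P1 P2 alpha beta t <= phi P1 P2 alpha beta ts) ->
  is_max (sum_rates P1 P2 alpha beta) (Ccap (phi P1 P2 alpha beta ts)).
Proof.
  intros H1 H2 Hts Hmax. unfold phi in *.
  pose proof (phi1_ge0 P1 alpha ts H1) as Hp1.
  pose proof (phi2_ge0 P2 beta ts H2) as Hp2.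
  split.
  - exists (Ccap (phi1 P1 alpha ts)),
      (Ccap (phi1 P1 alpha ts + phi2 P2 beta ts) - Ccap (phi1 P1 alpha ts)).
    split; [| ring].
    exists ts. split; [exact Hts |].
    pose proof (Ccap_ge0 _ Hp1).
    pose proof (Ccap_le (phi1 P1 alpha ts) (phi1 P1 alpha ts + phi2 P2 beta ts) Hp1 ltac:(lra)).
    pose proof (Ccap_subadditive _ _ Hp1 Hp2).
    unfold in_region, phi. lra.
  - intros s (R1 & R2 & (t & Ht & _ & _ & _ & _ & Hsum) & ->). unfold phi in Hsum.
    pose proof (phi1_ge0 P1 alpha t H1). pose proof (phi2_ge0 P2 beta t H2).
    pose proof (Ccap_le (phi1 P1 alpha t + phi2 P2 beta t) _ ltac:(lra) (Hmax t Ht)). lra.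
Qed.

Lemma phi_cos_sin P1 P2 alpha beta t :
  phi P1 P2 alpha beta t = (P1 + P2) / 2 +
    ((P1 * cos (2 * alpha) + P2 * cos (2 * beta)) * cos (2 * t)
     + (P1 * sin (2 * alpha) + P2 * sin (2 * beta)) * sin (2 * t)) / 2.
Proof.
  unfold phi, phi1, phi2.
  assert (Hsq : forall x, cos x ^ 2 = (1 + cos (2 * x)) / 2).
  { intros x. rewrite cos_2a_cos. field. }
  rewrite !Hsq.
  replace (2 * (t - alpha)) with (2 * t - 2 * alpha) by ring.
  replace (2 * (t - beta)) with (2 * t - 2 * beta) by ring.
  rewrite !cos_minus. field.
Qed.

Lemma sin_nonneg_neg_arg x : - PI <= x < 0 -> 0 <= sin x -> x = - PI.
Proof.
  intros Hx Hs. destruct (Req_dec x (- PI)) as [-> | Hne]; [reflexivity |].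
  assert (0 < sin (- x)) by (apply sin_gt_0; lra).
  rewrite sin_neg in *. lra.
Qed.

Section PolarAngle.

Variables P1 P2 alpha beta r u : R.
Hypothesis Hr : 0 < r.
Hypothesis Hcos : P1 * cos (2 * alpha) + P2 * cos (2 * beta) = r * cos u.
Hypothesis Hsin : P1 * sin (2 * alpha) + P2 * sin (2 * beta) = r * sin u.

Lemma phi_le_polar t : phi P1 P2 alpha beta t <= phi P1 P2 alpha beta (/ 2 * u).
Proof.
  rewrite !phi_cos_sin, Hcos, Hsin.
  replace (2 * (/ 2 * u)) with u by field.
  assert (Hcs : cos u * cos (2 * t) + sin u * sin (2 * t) <= cos u * cos u + sin u * sin u).
  { rewrite <- !cos_minus, Rminus_diag, cos_0. apply COS_bound. }
  nra.
Qed.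

(* A positive combination of unit vectors at angles [2α ≤ 2β] in [[0, π]] has its
   angle between them: the cross products with both vectors have the right sign. *)
Lemma polar_angle_between :
  0 <= alpha -> alpha <= beta -> beta <= PI / 2 -> 0 < P1 -> 0 < P2 ->
  0 <= u <= PI -> alpha <= / 2 * u <= beta.
Proof.
  intros Ha Hab Hb H1 H2 Hu.
  assert (Hd : 0 <= sin (2 * beta - 2 * alpha)) by (apply sin_ge_0; lra).
  assert (Hcross1 : r * sin (u - 2 * alpha) = P2 * sin (2 * beta - 2 * alpha)).
  { rewrite !sin_minus.
    transitivity ((r * sin u) * cos (2 * alpha) - (r * cos u) * sin (2 * alpha)); [ring |].
    rewrite <- Hcos, <- Hsin. ring. }
  assert (Hcross2 : r * sin (2 * beta - u) = P1 * sin (2 * beta - 2 * alpha)).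
  { rewrite !sin_minus.
    transitivity (sin (2 * beta) * (r * cos u) - cos (2 * beta) * (r * sin u)); [ring |].
    rewrite <- Hcos, <- Hsin. ring. }
  assert (Hs1 : 0 <= sin (u - 2 * alpha)).
  { apply (Rmult_le_reg_l r); [exact Hr |].
    rewrite Rmult_0_r, Hcross1. apply Rmult_le_pos; lra. }
  assert (Hs2 : 0 <= sin (2 * beta - u)).
  { apply (Rmult_le_reg_l r); [exact Hr |].
    rewrite Rmult_0_r, Hcross2. apply Rmult_le_pos; lra. }
  split.
  - destruct (Rle_lt_dec (2 * alpha) u) as [| Hlt]; [lra | exfalso].
    pose proof (sin_nonneg_neg_arg (u - 2 * alpha) ltac:(lra) Hs1).
    replace (2 * alpha) with PI in Hcos by lra.
    replace (2 * beta) with PI in Hcos by lra.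
    replace u with 0 in Hcos by lra.
    rewrite cos_PI, cos_0 in Hcos. lra.
  - destruct (Rle_lt_dec u (2 * beta)) as [| Hlt]; [lra | exfalso].
    pose proof (sin_nonneg_neg_arg (2 * beta - u) ltac:(lra) Hs2).
    replace (2 * alpha) with 0 in Hcos by lra.
    replace (2 * beta) with 0 in Hcos by lra.
    replace u with PI in Hcos by lra.
    rewrite cos_PI, cos_0 in Hcos. lra.
Qed.

Lemma sum_rates_max_at_half_angle :
  0 <= alpha -> alpha <= beta -> beta <= PI / 2 -> 0 < P1 -> 0 < P2 ->
  0 <= u <= PI ->
  is_max (sum_rates P1 P2 alpha beta) (Ccap (phi P1 P2 alpha beta (/ 2 * u))).
Proof.
  intros Ha Hab Hb H1 H2 Hu.
  apply sum_rates_is_max; [lra | lra | apply polar_angle_between; assumption |].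
  intros t _. apply phi_le_polar.
Qed.

End PolarAngle.

Lemma polar_atan_pos A B : 0 < A ->
  exists r, 0 < r /\ A = r * cos (atan (B / A)) /\ B = r * sin (atan (B / A)).
Proof.
  intros HA. assert (Hs : 0 < sqrt (1 + (B / A)²)) by (apply sqrt_lt_R0; unfold Rsqr; nra).
  exists (A * sqrt (1 + (B / A)²)).
  rewrite cos_atan, sin_atan. repeat split; [nra | field | field]; lra.
Qed.

Lemma polar_atan_neg A B : A < 0 ->
  exists r, 0 < r /\ A = r * cos (PI + atan (B / A)) /\ B = r * sin (PI + atan (B / A)).
Proof.
  intros HA. assert (Hs : 0 < sqrt (1 + (B / A)²)) by (apply sqrt_lt_R0; unfold Rsqr; nra).
  exists (- A * sqrt (1 + (B / A)²)).
  rewrite (Rplus_comm PI), neg_cos, neg_sin, cos_atan, sin_atan.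
  repeat split; [nra | field | field]; lra.
Qed.

Theorem lemma5 (P1 P2 alpha beta : R) :
  0 <= alpha -> alpha <= beta -> beta <= PI / 2 ->
  0 < P1 -> 0 < P2 ->
  P1 * cos (2 * alpha) + P2 * cos (2 * beta) <> 0 ->
  let T := Tval P1 P2 alpha beta in
  let th1 := / 2 * atan T in
  let th2 := / 2 * (PI + atan T) in
  let M := sum_rates P1 P2 alpha beta in
  (0 < T -> is_max M (Ccap (phi P1 P2 alpha beta th1))) /\
  (T < 0 -> is_max M (Ccap (phi P1 P2 alpha beta th2))) /\
  (T = 0 -> is_max M (Ccap (phi P1 P2 alpha beta th1)) \/
            is_max M (Ccap (phi P1 P2 alpha beta th2))).
Proof.
  intros Ha Hab Hb H1 H2 HA0 T th1 th2 M.
  set (A := P1 * cos (2 * alpha) + P2 * cos (2 * beta)) in *.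
  set (B := P1 * sin (2 * alpha) + P2 * sin (2 * beta)).
  assert (HTA : T * A = B) by (unfold T, Tval; fold A B; field; exact HA0).
  assert (HB : 0 <= B).
  { pose proof (sin_ge_0 (2 * alpha) ltac:(lra) ltac:(lra)).
    pose proof (sin_ge_0 (2 * beta) ltac:(lra) ltac:(lra)). unfold B. nra. }
  pose proof (atan_bound T) as Hat. pose proof PI_RGT_0.
  assert (Hmax1 : 0 < A -> is_max M (Ccap (phi P1 P2 alpha beta th1))).
  { intros HAp. assert (0 <= atan T).
    { rewrite <- atan_0. destruct (Rle_lt_dec T 0) as [[HTn | ->] | HTp];
        [nra | lra | left; apply atan_increasing; exact HTp]. }
    destruct (polar_atan_pos A B HAp) as (r & Hr & Hc & Hs).
    apply (sum_rates_max_at_half_angle P1 P2 alpha beta r); auto; lra. }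
  assert (Hmax2 : A < 0 -> is_max M (Ccap (phi P1 P2 alpha beta th2))).
  { intros HAn. assert (atan T <= 0).
    { rewrite <- atan_0. destruct (Rle_lt_dec 0 T) as [[HTp | <-] | HTn];
        [nra | lra | left; apply atan_increasing; exact HTn]. }
    destruct (polar_atan_neg A B HAn) as (r & Hr & Hc & Hs).
    apply (sum_rates_max_at_half_angle P1 P2 alpha beta r); auto; lra. }
  split; [| split]; intros HT.
  - apply Hmax1. nra.
  - apply Hmax2. nra.
  - destruct (Rlt_le_dec 0 A) as [HAp | [HAn | HA]]; [left; auto | right; auto | contradiction].
Qed.
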